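(* Let $G$ be an abelian group and let $\mathrm{pAut}\,G$ be the set of all partial automorphisms $\varphi$ of $G$ such that $G/\mathrm{Dom}\,\varphi$ and $G/\mathrm{Im}\,\varphi$ are $\aleph_1$-free. Then $\mathrm{pAut}\,G$ is a submonoid of the monoid of all partial automorphisms of $G$ (under composition of partial maps), it contains $1=\mathrm{id}_G$ and $-1=-\mathrm{id}_G$, and it is closed under taking weak inverses: if $\varphi\in\mathrm{pAut}\,G$ then $\varphi^{-1}\in\mathrm{pAut}\,G$.
   Context: A partial automorphism of $G$ is a group isomorphism $\varphi:\mathrm{Dom}\,\varphi\to\mathrm{Im}\,\varphi$ between subgroups of $G$; maps act on the right. The composition of partial automorphisms $\varphi,\psi$ is the partial automorphism $\varphi\psi$ with $\mathrm{Dom}(\varphi\psi)=(\mathrm{Im}\,\varphi\cap\mathrm{Dom}\,\psi)\varphi^{-1}$, $x(\varphi\psi)=(x\varphi)\psi$, and $\mathrm{Im}(\varphi\psi)=(\mathrm{Im}\,\varphi\cap\mathrm{Dom}\,\psi)\psi$. The weak inverse $\varphi^{-1}$ is the inverse isomorphism $\mathrm{Im}\,\varphi\to\mathrm{Dom}\,\varphi$. An abelian group is $\aleph_1$-free if every countable subgroup is free. *)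

From HB Require Import structures.
From mathcomp Require Import all_boot all_order all_algebra.
Set Implicit Arguments. Unset Strict Implicit. Unset Printing Implicit Defensive.
Import GRing.Theory.
Local Open Scope ring_scope.

Section Defs.
Variable G : zmodType.

Definition is_subgroup (S : G -> Prop) : Prop :=
  S 0 /\ (forall x y, S x -> S y -> S (x - y)).

(* ---------- The quotient G/H, elements represented by coset representatives ---------- *)
Definition congr_mod (H : G -> Prop) (x y : G) : Prop := H (x - y).

(* a subset of G/H, given as a union of cosets of H *)
Definition saturated (H S : G -> Prop) : Prop :=
  forall x y, S x -> congr_mod H x y -> S y.

Definition is_subgroup_mod (H S : G -> Prop) : Prop :=
  saturated H S /\ S 0 /\ (forall x y, S x -> S y -> S (x - y)).

(* the subset of G/H represented by S is countable (nonempty case: image of nat) *)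
Definition countable_mod (H S : G -> Prop) : Prop :=
  exists e : nat -> G, forall x, S x <-> exists n, congr_mod H (e n) x.

Definition independent_mod (H B : G -> Prop) : Prop :=
  forall (n : nat) (b : 'I_n -> G) (k : 'I_n -> int),
    (forall i, B (b i)) ->
    (forall i j, i != j -> ~ congr_mod H (b i) (b j)) ->
    H (\sum_(i < n) b i *~ k i) ->
    forall i, k i = 0.

Definition spans_mod (H S B : G -> Prop) : Prop :=
  forall x, S x -> exists (n : nat) (b : 'I_n -> G) (k : 'I_n -> int),
    (forall i, B (b i)) /\ congr_mod H x (\sum_(i < n) b i *~ k i).

Definition free_mod (H S : G -> Prop) : Prop :=
  exists B : G -> Prop, saturated H B /\ (forall b, B b -> S b) /\
    independent_mod H B /\ spans_mod H S B.

Definition quotient_aleph1_free (H : G -> Prop) : Prop :=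
  forall S : G -> Prop, is_subgroup_mod H S -> countable_mod H S -> free_mod H S.

(* ---------- Partial automorphisms, represented by their graphs ---------- *)
Definition pDom (R : G -> G -> Prop) : G -> Prop := fun x => exists y, R x y.
Definition pIm (R : G -> G -> Prop) : G -> Prop := fun y => exists x, R x y.

Definition is_partial_aut (R : G -> G -> Prop) : Prop :=
  [/\ is_subgroup (pDom R), is_subgroup (pIm R),
      (forall x y y', R x y -> R x y' -> y = y'),
      (forall x x' y, R x y -> R x' y -> x = x') &
      (forall x y x' y', R x y -> R x' y' -> R (x + x') (y + y'))].

(* composition (maps act on the right: x(phi psi) = (x phi) psi) *)
Definition pa_comp (R S : G -> G -> Prop) : G -> G -> Prop :=
  fun x z => exists y, R x y /\ S y z.
Definition pa_inv (R : G -> G -> Prop) : G -> G -> Prop := fun x y => R y x.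
Definition pa_id : G -> G -> Prop := fun x y => y = x.
Definition pa_neg : G -> G -> Prop := fun x y => y = - x.

Definition pAutG (R : G -> G -> Prop) : Prop :=
  [/\ is_partial_aut R, quotient_aleph1_free (pDom R) & quotient_aleph1_free (pIm R)].

End Defs.

From mathcomp Require Import all_boot all_order all_algebra.
From Stdlib Require Import ClassicalEpsilon FunctionalExtensionality PropExtensionality.
Set Implicit Arguments. Unset Strict Implicit. Unset Printing Implicit Defensive.
Import GRing.Theory.
Local Open Scope ring_scope.

(* For H ⊆ K, a countable subgroup S of G/H whose image in G/K is free splits
   as a lift of that image plus S ∩ K/H, so G/H is ℵ₁-free once G/K and K/H
   are.  A partial automorphism φ maps Dom φ/Dom(φψ) isomorphically onto
   Im φ/(Im φ ∩ Dom ψ) ⊆ G/(Im φ ∩ Dom ψ), and the latter is ℵ₁-free by the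
   same splitting, as Im φ/(Im φ ∩ Dom ψ) embeds in G/Dom ψ.  Images reduce to
   domains through Im(φψ) = Dom(ψ⁻¹φ⁻¹). *)

Section Subgroups.
Variable G : zmodType.
Implicit Types (P : G -> Prop) (R : G -> G -> Prop).

Definition is_subgroup_rel R : Prop :=
  R 0 0 /\ (forall x y x' y', R x y -> R x' y' -> R (x - x') (y - y')).

Lemma subgroup_relN R : is_subgroup_rel R -> forall x y, R x y -> R (- x) (- y).
Proof. by case=> R0 RB x y Rxy; rewrite -sub0r -(sub0r y); apply: RB. Qed.

Lemma subgroup_relD R : is_subgroup_rel R ->
  forall x y x' y', R x y -> R x' y' -> R (x + x') (y + y').
Proof.
move=> sR x y x' y' Rxy Rxy'; rewrite -(opprK x') -(opprK y').
by apply: sR.2 => //; apply: subgroup_relN.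
Qed.

Lemma subgroup_relMz R : is_subgroup_rel R ->
  forall x y (k : int), R x y -> R (x *~ k) (y *~ k).
Proof.
move=> sR x y k Rxy; have RMn m : R (x *+ m) (y *+ m).
  by elim: m => [|m IH]; [rewrite !mulr0n; case: sR | rewrite !mulrS; apply: subgroup_relD].
case: k => m; first exact: RMn.
by rewrite NegzE !mulrNz; apply: subgroup_relN => //; apply: RMn.
Qed.

Lemma subgroup_rel_big R : is_subgroup_rel R ->
  forall n (f g : 'I_n -> G), (forall i, R (f i) (g i)) ->
  R (\sum_(i < n) f i) (\sum_(i < n) g i).
Proof.
move=> sR n f g Rfg; apply: (big_ind2 R) => //; first by case: sR.
exact: subgroup_relD.
Qed.

Lemma subgroup_rel_sum R : is_subgroup_rel R ->
  forall n (a b : 'I_n -> G) (k : 'I_n -> int), (forall i, R (a i) (b i)) ->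
  R (\sum_(i < n) a i *~ k i) (\sum_(i < n) b i *~ k i).
Proof.
by move=> sR n a b k Rab; apply: subgroup_rel_big => // i; apply: subgroup_relMz.
Qed.

Lemma subgroup_rel_of P : is_subgroup P -> is_subgroup_rel (fun x (_ : G) => P x).
Proof. by case=> P0 PB; split=> // x y x' y'; apply: PB. Qed.

Lemma subgroup0 P : is_subgroup P -> P 0.
Proof. by case. Qed.

Lemma subgroupB P : is_subgroup P -> forall x y, P x -> P y -> P (x - y).
Proof. by case. Qed.

Lemma subgroupN P : is_subgroup P -> forall x, P x -> P (- x).
Proof. by move=> sP x Px; apply: (subgroup_relN (subgroup_rel_of sP) (y := 0) Px). Qed.

Lemma subgroupD P : is_subgroup P -> forall x y, P x -> P y -> P (x + y).
Proof.
move=> sP x y Px Py.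
exact: (subgroup_relD (subgroup_rel_of sP) (y := 0) (y' := 0) Px Py).
Qed.

Lemma subgroupMz P : is_subgroup P -> forall x (k : int), P x -> P (x *~ k).
Proof. by move=> sP x k Px; exact: (subgroup_relMz (subgroup_rel_of sP) (y := 0) k Px). Qed.

Lemma subgroup_sum P : is_subgroup P -> forall n (a : 'I_n -> G) (k : 'I_n -> int),
  (forall i, P (a i)) -> P (\sum_(i < n) a i *~ k i).
Proof.
by move=> sP n a k Pa; exact: (subgroup_rel_sum (subgroup_rel_of sP) k (b := a) Pa).
Qed.

Definition meet (A B : G -> Prop) : G -> Prop := fun x => A x /\ B x.

Lemma subgroup_meet A B : is_subgroup A -> is_subgroup B -> is_subgroup (meet A B).
Proof.
move=> sA sB; split; first by split; apply: subgroup0.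
by move=> x y [Ax Bx] [Ay By]; split; apply: subgroupB.
Qed.

Lemma congr_mod_refl P : is_subgroup P -> forall x, congr_mod P x x.
Proof. by move=> sP x; rewrite /congr_mod subrr; apply: subgroup0. Qed.

Lemma congr_mod_sym P : is_subgroup P -> forall x y, congr_mod P x y -> congr_mod P y x.
Proof. by move=> sP x y Pxy; rewrite /congr_mod -opprB; apply: subgroupN. Qed.

Lemma congr_mod_trans P : is_subgroup P ->
  forall x y z, congr_mod P x y -> congr_mod P y z -> congr_mod P x z.
Proof.
move=> sP x y z Pxy Pyz.
by have := subgroupD sP Pxy Pyz; rewrite addrA subrK.
Qed.

Lemma congr_mod_subgroup_rel P : is_subgroup P -> is_subgroup_rel (congr_mod P).
Proof.
move=> sP; split=> [|x y x' y' Pxy Pxy']; first exact: congr_mod_refl.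
rewrite /congr_mod; have -> : x - x' - (y - y') = (x - y) - (x' - y').
  by rewrite opprB addrACA [in RHS]opprB [in RHS]addrACA [- x' + _]addrC.
exact: subgroupB.
Qed.

Lemma subgroup_saturated P : is_subgroup P -> saturated P P.
Proof. by move=> sP x y Px Pxy; have := subgroupB sP Px Pxy; rewrite subKr. Qed.

Lemma congr_mod_sum P : is_subgroup P -> forall n (a b : 'I_n -> G) (k : 'I_n -> int),
  (forall i, congr_mod P (a i) (b i)) ->
  congr_mod P (\sum_(i < n) a i *~ k i) (\sum_(i < n) b i *~ k i).
Proof. by move=> sP; apply: subgroup_rel_sum; apply: congr_mod_subgroup_rel. Qed.

End Subgroups.

Section Bases.
Variable G : zmodType.
Implicit Types H S B : G -> Prop.

Definition is_basis_mod H S B : Prop :=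
  saturated H B /\ (forall b, B b -> S b) /\ independent_mod H B /\ spans_mod H S B.

Definition subquotient_aleph1_free K H : Prop := forall S, (forall x, S x -> K x) ->
  is_subgroup_mod H S -> countable_mod H S -> free_mod H S.

Lemma countable_mod_mem H S (e : nat -> G) : is_subgroup H ->
  (forall x, S x <-> exists n, congr_mod H (e n) x) -> forall n, S (e n).
Proof. by move=> sH eS n; apply/eS; exists n; apply: congr_mod_refl. Qed.

Lemma independent_mod_relaxed H B : independent_mod H B ->
  forall n (b : 'I_n -> G) (k : 'I_n -> int),
  (forall i, k i = 0 \/ B (b i)) ->
  (forall i j, i != j -> k i != 0 -> k j != 0 -> ~ congr_mod H (b i) (b j)) ->
  H (\sum_(i < n) b i *~ k i) -> forall i, k i = 0.
Proof.
move=> indB; elim=> [|n IH] b k Bb b_uniq Hsum; first by case.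
case: (pickP (fun i => k i == 0)) => [i0 /eqP k0 | k_neq0]; last first.
  move=> i; apply: (indB _ b k) => //.
    by move=> j; case: (Bb j) => // kj0; move: (k_neq0 j); rewrite kj0.
  by move=> j l ne; apply: b_uniq; rewrite ?k_neq0.
rewrite (bigD1_ord i0) //= k0 mulr0z add0r in Hsum.
have k_lift0 := IH _ _ (fun j => Bb (lift i0 j)) _ Hsum.
move=> i; case: (unliftP i0 i) => [j -> | ->] //; apply: k_lift0.
by move=> l1 l2 ne; apply: b_uniq; rewrite (inj_eq (@lift_inj _ i0)).
Qed.

End Bases.

Section Transfer.
Variable G : zmodType.
Variables (H H' : G -> Prop) (R : G -> G -> Prop).
Hypotheses (sH : is_subgroup H) (sH' : is_subgroup H') (sR : is_subgroup_rel R).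
Hypothesis R_congr : forall x y, R x y -> H x <-> H' y.

Lemma rel_congr_mod x y x' y' : R x y -> R x' y' ->
  congr_mod H x x' <-> congr_mod H' y y'.
Proof. by move=> Rxy Rxy'; apply: R_congr; apply: sR.2. Qed.

Section Image.
Variable S : G -> Prop.
Hypotheses (sS : is_subgroup_mod H S) (S_dom : forall x, S x -> pDom R x).

Definition rel_image : G -> Prop :=
  fun y => exists x y0, [/\ S x, R x y0 & congr_mod H' y y0].

Definition rel_preimage (B' : G -> Prop) : G -> Prop :=
  fun x => S x /\ exists y, R x y /\ B' y.

Lemma rel_image_subgroup_mod : is_subgroup_mod H' rel_image.
Proof.
case: sS => _ [S0 SB]; split; [|split].
- move=> y y' [x [y0 [Sx Rxy0 yy0]]] yy'; exists x, y0; split => //.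
  exact: (congr_mod_trans sH' (congr_mod_sym sH' yy') yy0).
- by exists 0, 0; split; [| case: sR | apply: congr_mod_refl].
- move=> y y' [x [y0 [Sx Rxy0 yy0]]] [x' [y0' [Sx' Rxy0' yy0']]].
  exists (x - x'), (y0 - y0'); split; [exact: SB | exact: sR.2 |].
  exact: (congr_mod_subgroup_rel sH').2.
Qed.

Lemma rel_image_countable : countable_mod H S -> countable_mod H' rel_image.
Proof.
case=> e eS; have Se := countable_mod_mem sH eS.
have [e' Re'] : exists e' : nat -> G, forall n, R (e n) (e' n).
  by apply: (choice (fun n => R (e n))) => n; apply: S_dom.
exists e' => y; split.
- move=> [x [y0 [Sx Rxy0 yy0]]]; have [n enx] := (eS x).1 Sx; exists n.
  apply: (congr_mod_trans sH' _ (congr_mod_sym sH' yy0)).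
  exact/(rel_congr_mod (Re' n) Rxy0).
- move=> [n e'ny]; exists (e n), (e' n).
  by split; [exact: Se | exact: Re' | exact: congr_mod_sym].
Qed.

Lemma rel_preimage_basis B' : is_basis_mod H' rel_image B' ->
  is_basis_mod H S (rel_preimage B').
Proof.
case: sS => satS _ [satB' [B'im [indB' spanB']]]; split; [|split; [|split]].
- move=> x x' [Sx [y [Rxy B'y]]] xx'; have Sx' := satS _ _ Sx xx'.
  have [y' Rxy'] := S_dom Sx'; split=> //; exists y'; split=> //.
  exact/(satB' _ _ B'y)/(rel_congr_mod Rxy Rxy').
- by move=> x [].
- move=> n b k Bb b_uniq Hsum; have [c Bc] := choice _ (fun i => (Bb i).2).
  have Rsum := subgroup_rel_sum sR k (fun i => (Bc i).1).
  apply: (indB' n c k) => [i|i j ne cij|]; first exact: (Bc i).2.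
    by apply: (b_uniq i j ne); apply/(rel_congr_mod (Bc i).1 (Bc j).1).
  exact/(R_congr Rsum).
- move=> x Sx; have [y Rxy] := S_dom Sx.
  have imy : rel_image y by exists x, y; split=> //; apply: congr_mod_refl.
  have [n [c [k [B'c yc]]]] := spanB' y imy.
  have [b Rbc] := choice _ (fun i => B'im _ (B'c i)).
  have [c' Rbc'] := choice _ (fun i => Rbc i).
  exists n, b, k; split.
    move=> i; case: (Rbc' i) => Sbi Rbi cc'; split => //; exists (c' i); split => //.
    exact: satB' (B'c i) cc'.
  have Rsum := subgroup_rel_sum sR k (fun i => let: And3 _ r _ := Rbc' i in r).
  apply/(rel_congr_mod Rxy Rsum)/(congr_mod_trans sH' yc).
  by apply: congr_mod_sum => // i; case: (Rbc' i).
Qed.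

End Image.

Lemma subquotient_aleph1_free_rel (K : G -> Prop) : (forall x, K x -> pDom R x) ->
  quotient_aleph1_free H' -> subquotient_aleph1_free K H.
Proof.
move=> K_dom qH' S SK sS cS; have S_dom x (Sx : S x) := K_dom x (SK x Sx).
have [B' basisB'] := qH' _ (rel_image_subgroup_mod sS) (rel_image_countable S_dom cS).
by exists (rel_preimage S B'); apply: rel_preimage_basis.
Qed.

End Transfer.

Lemma combination_add (G : zmodType) (B : G -> Prop) n1 n2
    (b1 : 'I_n1 -> G) (k1 : 'I_n1 -> int) (b2 : 'I_n2 -> G) (k2 : 'I_n2 -> int) :
  (forall j, B (b1 j)) -> (forall j, B (b2 j)) ->
  exists (n : nat) (b : 'I_n -> G) (k : 'I_n -> int), (forall i, B (b i)) /\
    \sum_(i < n) b i *~ k i = \sum_(j < n1) b1 j *~ k1 j + \sum_(j < n2) b2 j *~ k2 j.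
Proof.
move=> Bb1 Bb2; pose b i := match split i with inl j => b1 j | inr j => b2 j end.
pose k i := match split i with inl j => k1 j | inr j => k2 j end.
exists (n1 + n2)%N, b, k; split=> [i|]; first by rewrite /b; case: (split i).
rewrite big_split_ord; congr (_ + _); apply: eq_bigr => j _.
  by rewrite /b /k (unsplitK (inl j : 'I_n1 + 'I_n2)).
by rewrite /b /k (unsplitK (inr j : 'I_n1 + 'I_n2)).
Qed.

Section Extension.
Variable G : zmodType.
Variables H K S : G -> Prop.
Hypotheses (sH : is_subgroup H) (sK : is_subgroup K) (HK : forall x, H x -> K x).
Hypothesis sS : is_subgroup_mod H S.

Definition coset_image : G -> Prop := fun x => exists c, S c /\ congr_mod K x c.

Lemma coset_image_subgroup_mod : is_subgroup_mod K coset_image.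
Proof.
case: sS => _ [S0 SB]; split; [|split].
- move=> x y [c [Sc xc]] xy; exists c; split=> //.
  exact: (congr_mod_trans sK (congr_mod_sym sK xy) xc).
- by exists 0; split=> //; apply: congr_mod_refl.
- move=> x y [c [Sc xc]] [d [Sd yd]]; exists (c - d); split; first exact: SB.
  exact: (congr_mod_subgroup_rel sK).2.
Qed.

Lemma coset_image_countable : countable_mod H S -> countable_mod K coset_image.
Proof.
case=> e eS; exists e => x; split.
- move=> [c [Sc xc]]; have [n enc] := (eS c).1 Sc; exists n.
  exact: (congr_mod_trans sK (HK enc) (congr_mod_sym sK xc)).
- move=> [n enx]; exists (e n); split; first exact: countable_mod_mem sH eS n.
  exact: congr_mod_sym.
Qed.

Lemma subgroup_mod_meet : is_subgroup_mod H (meet S K).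
Proof.
case: sS => satS [S0 SB]; split; [|split].
- move=> x y [Sx Kx] xy; split; first exact: satS Sx xy.
  exact: (subgroup_saturated sK Kx (HK xy)).
- by split=> //; apply: subgroup0.
- by move=> x y [Sx Kx] [Sy Ky]; split; [apply: SB | apply: subgroupB].
Qed.

Lemma countable_mod_meet : countable_mod H S -> countable_mod H (meet S K).
Proof.
case=> e eS; have [satM [M0 _]] := subgroup_mod_meet.
pose e' n := if excluded_middle_informative (K (e n)) then e n else 0.
have Me' n : meet S K (e' n).
  rewrite /e'; case: excluded_middle_informative => // Ken.
  by split=> //; apply: countable_mod_mem sH eS n.
exists e' => x; split=> [[Sx Kx] | [n e'nx]]; last exact: satM (Me' n) e'nx.
have [n enx] := (eS x).1 Sx; exists n.
have Ken : K (e n) by exact: (subgroup_saturated sK Kx (HK (congr_mod_sym sH enx))).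
by rewrite /e'; case: excluded_middle_informative.
Qed.

Definition coset_lift (b : G) : G :=
  epsilon (inhabits 0) (fun c => S c /\ congr_mod K c b).

Lemma coset_liftP b : coset_image b -> S (coset_lift b) /\ congr_mod K (coset_lift b) b.
Proof.
move=> [c [Sc bc]]; apply: (epsilon_spec (inhabits 0) (fun c => S c /\ congr_mod K c b)).
by exists c; split=> //; apply: congr_mod_sym.
Qed.

Lemma coset_lift_congr b b' : congr_mod K b b' -> coset_lift b = coset_lift b'.
Proof.
move=> bb'; rewrite /coset_lift; congr epsilon.
apply: functional_extensionality => c; apply: propositional_extensionality.
split=> -[Sc cb]; split=> //.
  exact: (congr_mod_trans sK cb bb').
exact: (congr_mod_trans sK cb (congr_mod_sym sK bb')).
Qed.

Variables B1 B2 : G -> Prop.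
Hypotheses (basis1 : is_basis_mod K coset_image B1) (basis2 : is_basis_mod H (meet S K) B2).

Definition ext_basis : G -> Prop :=
  fun x => (exists b, B1 b /\ congr_mod H x (coset_lift b)) \/ B2 x.

Lemma ext_basis_independent : independent_mod H ext_basis.
Proof.
case: basis1 => _ [B1im [indB1 _]]; case: basis2 => _ [B2meet [indB2 _]].
move=> n b k Bb b_uniq Hsum.
have pP_ex i : exists q : G * int,
    [/\ B1 q.1, congr_mod H (b i) (coset_lift q.1) & q.2 = k i] \/ B2 (b i) /\ q.2 = 0.
  case: (Bb i) => [[c [B1c bc]] | B2b]; first by exists (c, k i); left.
  by exists (0, 0); right.
have [p pP] := choice _ pP_ex.
have bp i : congr_mod K (b i *~ k i) ((p i).1 *~ (p i).2).
  case: (pP i) => [[B1p bc ->] | [B2b ->]].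
    have bpK := congr_mod_trans sK (HK bc) (coset_liftP (B1im _ B1p)).2.
    exact: (subgroup_relMz (congr_mod_subgroup_rel sK) (k i) bpK).
  by rewrite /congr_mod mulr0z subr0; apply: subgroupMz; case: (B2meet _ B2b).
have p0 : forall i, (p i).2 = 0.
  (* Modulo K only the lifted B1-terms survive, and B1 is independent mod K. *)
  apply: (independent_mod_relaxed indB1 (b := fun i => (p i).1) (k := fun i => (p i).2)).
  - by move=> j; case: (pP j) => [[] | []]; [right | left].
  - move=> j l ne; case: (pP j) => [[B1j bj _] | [_ ->]]; last by rewrite eqxx.
    case: (pP l) => [[B1l bl _] | [_ ->]]; last by rewrite eqxx.
    move=> _ _ /coset_lift_congr jl; apply: (b_uniq j l ne).
    by rewrite jl in bj; apply: (congr_mod_trans sH bj (congr_mod_sym sH bl)).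
  - have sum_bp := subgroup_rel_big (congr_mod_subgroup_rel sK) bp.
    exact: (subgroup_saturated sK (HK Hsum) sum_bp).
apply: (independent_mod_relaxed indB2) Hsum => [i|i j ne _ _]; last exact: b_uniq.
by case: (pP i) => [[_ _ <-] | []]; [left | right].
Qed.

Lemma ext_basis_spans : spans_mod H S ext_basis.
Proof.
case: basis1 => _ [B1im [_ spanB1]]; case: basis2 => _ [_ [_ spanB2]].
case: sS => _ sS_sub x Sx.
have Ix : coset_image x by exists x; split=> //; apply: congr_mod_refl.
have [n1 [b1 [k1 [B1b1 xb1]]]] := spanB1 x Ix.
pose c j := coset_lift (b1 j); have cP j := coset_liftP (B1im _ (B1b1 j)).
pose y := x - \sum_(j < n1) c j *~ k1 j.
have My : meet S K y.
  split; first by apply: subgroupB => //; apply: subgroup_sum => // j; case: (cP j).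
  apply: (congr_mod_trans sK xb1); apply: congr_mod_sym => //.
  by apply: congr_mod_sum => // j; case: (cP j).
have [n2 [b2 [k2 [B2b2 yb2]]]] := spanB2 y My.
have Bc j : ext_basis (c j) by left; exists (b1 j); split=> //; apply: congr_mod_refl.
have Bb2 j : ext_basis (b2 j) by right.
have [n [b [k [Bb sum_bk]]]] := combination_add k1 k2 Bc Bb2.
by exists n, b, k; split=> //; rewrite /congr_mod sum_bk opprD addrA.
Qed.

Lemma ext_basis_basis : is_basis_mod H S ext_basis.
Proof.
case: basis1 => satB1 [B1im _]; case: basis2 => satB2 [B2meet _]; case: sS => satS _.
split; [|split; [|split; [exact: ext_basis_independent | exact: ext_basis_spans]]].
- move=> x y [[b [B1b xb]] | B2x] xy; last by right; apply: satB2 B2x xy.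
  by left; exists b; split=> //; apply: (congr_mod_trans sH (congr_mod_sym sH xy) xb).
- move=> x [[b [B1b xb]] | B2x]; last by case: (B2meet _ B2x).
  exact: satS (coset_liftP (B1im _ B1b)).1 (congr_mod_sym sH xb).
Qed.

End Extension.

Lemma quotient_aleph1_free_ext (G : zmodType) (H K : G -> Prop) :
  is_subgroup H -> is_subgroup K -> (forall x, H x -> K x) ->
  quotient_aleph1_free K -> subquotient_aleph1_free K H -> quotient_aleph1_free H.
Proof.
move=> sH sK HK qK qKH S sS cS.
have [B1 basis1] :=
  qK _ (coset_image_subgroup_mod sK sS) (coset_image_countable sH sK HK cS).
have [B2 basis2] := qKH (meet S K) (fun x => @proj2 _ _)
  (subgroup_mod_meet sK HK sS) (countable_mod_meet sH sK HK sS cS).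
by exists (ext_basis H K S B1 B2); apply: ext_basis_basis.
Qed.

Lemma quotient_aleph1_free_meet (G : zmodType) (A B : G -> Prop) :
  is_subgroup A -> is_subgroup B -> quotient_aleph1_free A -> quotient_aleph1_free B ->
  quotient_aleph1_free (meet A B).
Proof.
move=> sA sB qA qB; have sAB := subgroup_meet sA sB.
apply: (quotient_aleph1_free_ext sAB sA (fun x => @proj1 _ _) qA).
apply: (subquotient_aleph1_free_rel (R := fun x y => A x /\ y = x) sAB sB _ _ _ qB).
- split=> [|x y x' y' [Ax ->] [Ax' ->]]; split=> //; [exact: subgroup0 | exact: subgroupB].
- by move=> x y [Ax ->]; split=> [[]|].
- by move=> x Ax; exists x.
Qed.

Section PartialAutomorphisms.
Variable G : zmodType.
Implicit Types R S : G -> G -> Prop.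

Lemma partial_aut_subgroup_rel R : is_partial_aut R -> is_subgroup_rel R.
Proof.
case=> sD _ R_fun _ RD.
have R00 : R 0 0.
  have [y R0y] := subgroup0 sD; have := RD _ _ _ _ R0y R0y; rewrite addr0 => R0yy.
  have y0 : y = 0 by rewrite -[y](addrK y) (R_fun _ _ _ R0yy R0y) subrr.
  by rewrite y0 in R0y.
split=> // x y x' y' Rxy Rxy'; have [w Rw] := subgroupN sD (ex_intro _ y' Rxy').
have := RD _ _ _ _ Rxy' Rw; rewrite subrr => R0w.
have -> : - y' = w by rewrite -(addKr y' w) (R_fun _ _ _ R0w R00) addr0.
exact: RD.
Qed.

Lemma partial_aut_inv R : is_partial_aut R -> is_partial_aut (pa_inv R).
Proof.
case=> sD sI R_fun R_inj RD; split=> // [x y y' | x x' y | x y x' y'].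
- exact: R_inj.
- exact: R_fun.
- exact: RD.
Qed.

Lemma partial_aut_comp R S : is_partial_aut R -> is_partial_aut S ->
  is_partial_aut (pa_comp R S).
Proof.
move=> pR pS; have [R00 RB] := partial_aut_subgroup_rel pR.
have [S00 SB] := partial_aut_subgroup_rel pS.
case: pR => _ _ R_fun R_inj RD; case: pS => _ _ S_fun S_inj SD.
have compB x z x' z' :
    pa_comp R S x z -> pa_comp R S x' z' -> pa_comp R S (x - x') (z - z').
  by move=> [y [Rxy Syz]] [y' [Rxy' Syz']]; exists (y - y'); split; [apply: RB | apply: SB].
split.
- split=> [|x x' [z Rz] [z' Rz']]; first by exists 0, 0.
  by exists (z - z'); apply: compB.
- split=> [|z z' [x Rx] [x' Rx']]; first by exists 0, 0.
  by exists (x - x'); apply: compB.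
- move=> x z z' [y [Rxy Syz]] [y' [Rxy' Syz']].
  by rewrite (R_fun _ _ _ Rxy Rxy') in Syz; apply: S_fun Syz Syz'.
- move=> x x' z [y [Rxy Syz]] [y' [Rxy' Syz']].
  by rewrite -(S_inj _ _ _ Syz Syz') in Rxy'; apply: R_inj Rxy Rxy'.
- move=> x z x' z' [y [Rxy Syz]] [y' [Rxy' Syz']].
  by exists (y + y'); split; [apply: RD | apply: SD].
Qed.

Lemma quotient_aleph1_free_full (H : G -> Prop) : (forall x, H x) -> quotient_aleph1_free H.
Proof.
move=> Hfull S _ _; exists (fun _ => False); split; [by [] | split; [by [] | split]].
  by move=> n b k Bb _ _ i; case: (Bb i).
by move=> x _; exists 0%N, (fun _ => 0), (fun _ => 0); split; [case | apply: Hfull].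
Qed.

Lemma pAutG_graph (f : G -> G) : {morph f : x y / x + y} -> injective f ->
  (forall y, exists x, f x = y) -> pAutG (fun x y => y = f x).
Proof.
move=> fD f_inj f_surj; have dom_f x : pDom (fun x y => y = f x) x by exists (f x).
have im_f y : pIm (fun x y => y = f x) y by have [x <-] := f_surj y; exists x.
split; [split | exact: quotient_aleph1_free_full | exact: quotient_aleph1_free_full].
- by split=> *; apply: dom_f.
- by split=> *; apply: im_f.
- by move=> x y y' -> ->.
- by move=> x x' y -> /f_inj.
- by move=> x y x' y' -> ->; rewrite fD.
Qed.

Lemma pAutG_inv R : pAutG R -> pAutG (pa_inv R).
Proof. by case=> pR qD qI; split=> //; apply: partial_aut_inv. Qed.

Lemma quotient_aleph1_free_pDom_comp R S : pAutG R -> pAutG S ->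
  quotient_aleph1_free (pDom (pa_comp R S)).
Proof.
move=> [pR qDR qIR] [pS qDS _]; have sR := partial_aut_subgroup_rel pR.
have [sDC _ _ _ _] := partial_aut_comp pR pS.
have [sDR sIR R_fun _ _] := pR; have [sDS _ _ _ _] := pS.
apply: (quotient_aleph1_free_ext sDC sDR) => // [x [z [y [Rxy _]]]|]; first by exists y.
apply: (subquotient_aleph1_free_rel sDC (subgroup_meet sIR sDS) sR).
- move=> x y Rxy; split=> [[z [y' [Rxy' Sy'z]]] | [_ [z Syz]]]; last by exists z, y.
  by rewrite (R_fun _ _ _ Rxy Rxy'); split; [exists x | exists z].
- by [].
- exact: quotient_aleph1_free_meet.
Qed.

Lemma pIm_comp R S : pIm (pa_comp R S) = pDom (pa_comp (pa_inv S) (pa_inv R)).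
Proof.
apply: functional_extensionality => z; apply: propositional_extensionality.
by split=> -[x [y [Rxy Syz]]]; exists x, y.
Qed.

Lemma pAutG_comp R S : pAutG R -> pAutG S -> pAutG (pa_comp R S).
Proof.
move=> AR AS; have [pR _ _] := AR; have [pS _ _] := AS.
split; [exact: partial_aut_comp | exact: quotient_aleph1_free_pDom_comp |].
by rewrite pIm_comp; apply: quotient_aleph1_free_pDom_comp; apply: pAutG_inv.
Qed.

End PartialAutomorphisms.

Theorem lemma3p1 (G : zmodType) :
  [/\ pAutG (@pa_id G),
      pAutG (@pa_neg G),
      (forall R S : G -> G -> Prop, pAutG R -> pAutG S -> pAutG (pa_comp R S)) &
      (forall R : G -> G -> Prop, pAutG R -> pAutG (pa_inv R))].
Proof.
split; [| |exact: pAutG_comp | exact: pAutG_inv].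
- by apply: (pAutG_graph (f := id)) => // y; exists y.
- apply: (pAutG_graph (f := -%R)); [exact: opprD | exact: oppr_inj |].
  by move=> y; exists (- y); rewrite opprK.
Qed.
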